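(* Let $\varepsilon<\frac1{4\sqrt2}$ and let $|\nu\rangle=\frac1{\sqrt2}\big(|0^n\rangle|\psi_0\rangle+|1^n\rangle|\psi_1\rangle\big)$ be an $n$-nekomata state, where $|\psi_0\rangle,|\psi_1\rangle$ are arbitrary states on the same number of qubits. Then $\deg_\varepsilon(|\nu\rangle\langle\nu|)\ge n$. In particular, for the cat state $|\mathrm{Cat}_n\rangle=\frac1{\sqrt2}(|0^n\rangle+|1^n\rangle)$, $\deg_\varepsilon(|\mathrm{Cat}_n\rangle\langle\mathrm{Cat}_n|)\ge n$.
   Context: Pauli degree: with $P_\sigma=\bigotimes_iP_{\sigma_i}$, $P_0=I,P_1=X,P_2=Y,P_3=Z$, every $2^m\times2^m$ matrix is $A=\sum_\sigma\hat A(\sigma)P_\sigma$, $\deg(A)=\max\{|\{i:\sigma_i\ne0\}|:\hat A(\sigma)\ne0\}$, and $\deg_\varepsilon(A)=\min\{\deg(B):\|A-B\|\le\varepsilon\}$ with $\|\cdot\|$ the spectral norm. *)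

From HB Require Import structures.
From mathcomp Require Import all_boot all_order all_algebra.
From mathcomp Require Import reals.
From mathcomp Require Import complex.
Set Implicit Arguments.
Unset Strict Implicit.
Unset Printing Implicit Defensive.
Import Order.TTheory GRing.Theory Num.Theory.
Local Open Scope ring_scope.

Section Pauli.
Variable R : realType.
Local Notation C := (R[i]).

(* Single-qubit Pauli matrices P_0 = I, P_1 = X, P_2 = Y, P_3 = Z,
   given entrywise: pauli1 s a b = <a| P_s |b>, with bits a b : bool. *)
Definition pauli1 (s : 'I_4) (a b : bool) : C :=
  match nat_of_ord s with
  | 0%N => (a == b)%:R
  | 1%N => (a != b)%:R
  | 2%N => if a == b then 0 else if a then 'i%C else - 'i%C
  | _ => if a == b then (if a then -1 else 1) else 0
  end.

(* Convention: for a k-qubit system the computational basis index i < 2^k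
   has the bit of qubit t equal to odd (i %/ 2^t). *)
Definition qbit (i t : nat) : bool := odd (i %/ 2 ^ t).

(* P_sigma = tensor_t P_{sigma_t} *)
Definition pauli_mx (k : nat) (sigma : {ffun 'I_k -> 'I_4}) : 'M[C]_(2 ^ k) :=
  \matrix_(i, j) \prod_(t < k) pauli1 (sigma t) (qbit i t) (qbit j t).

Definition pauli_weight (k : nat) (sigma : {ffun 'I_k -> 'I_4}) : nat :=
  #|[set t | nat_of_ord (sigma t) != 0%N]|.

(* deg(A) <= d : A = sum_sigma c(sigma) P_sigma with all coefficients of
   Pauli strings of weight > d equal to zero (the expansion is unique). *)
Definition pauli_deg_le (k : nat) (A : 'M[C]_(2 ^ k)) (d : nat) : Prop :=
  exists c : {ffun 'I_k -> 'I_4} -> C,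
    (forall sigma, (d < pauli_weight sigma)%N -> c sigma = 0) /\
    A = \sum_sigma c sigma *: pauli_mx sigma.

Definition vnorm (N : nat) (v : 'cV[C]_N) : C :=
  sqrtC (\sum_i `|v i 0| ^+ 2).

Definition spec_norm_le (N : nat) (A : 'M[C]_N) (eps : R) : Prop :=
  forall v : 'cV[C]_N, vnorm (A *m v) <= (eps%:C)%C * vnorm v.

Definition approx_deg_ge (k : nat) (A : 'M[C]_(2 ^ k)) (eps : R) (n : nat)
  : Prop :=
  forall B : 'M[C]_(2 ^ k), spec_norm_le (A - B) eps ->
    forall d, pauli_deg_le B d -> (n <= d)%N.

Definition is_state (N : nat) (v : 'cV[C]_N) : Prop := \sum_i `|v i 0| ^+ 2 = 1.

Definition proj (N : nat) (v : 'cV[C]_N) : 'M[C]_N := v *m (map_mx Num.conj v)^T.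

(* entry of a vector at a natural-number index (0 out of range) *)
Definition vat (N : nat) (v : 'cV[C]_N) (k : nat) : C :=
  if insub k is Some i then v i 0 else 0.

(* n-nekomata state (|0^n>|psi0> + |1^n>|psi1>)/sqrt 2 on n + m qubits:
   qubits 0..n-1 form the cat register, qubits n..n+m-1 hold psi. *)
Definition nekomata (n m : nat) (psi0 psi1 : 'cV[C]_(2 ^ m)) : 'cV[C]_(2 ^ (n + m)) :=
  \col_i (((Num.sqrt (2 : R))^-1)%:C%C *
     (((i %% 2 ^ n)%N == 0%N)%:R * vat psi0 (i %/ 2 ^ n)
      + ((i %% 2 ^ n)%N == (2 ^ n).-1)%:R * vat psi1 (i %/ 2 ^ n))).

Definition cat_state (n : nat) : 'cV[C]_(2 ^ n) :=
  \col_i (((Num.sqrt (2 : R))^-1)%:C%C *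
     (((i : nat) == 0%N)%:R + ((i : nat) == (2 ^ n).-1)%:R)).

End Pauli.

(* A Pauli string of weight < n acts as the identity on one of the first n
   qubits, so a matrix B of Pauli degree < n vanishes on the block whose rows
   have first n qubits 0^n and whose columns have first n qubits 1^n.  Split
   |nu> into its parts v0 and v1 on these rows and columns; both have norm
   1/sqrt 2.  On the 0^n rows, (|nu><nu| - B) v1 agrees with
   |nu><nu| v1 = |v1|^2 |nu>, whence |v0| |v1|^2 <= ||(|nu><nu| - B) v1|| and
   || |nu><nu| - B || >= |v0| |v1| = 1/2.  So the bound holds for every
   eps < 1/2, in particular for eps < 1/(4 sqrt 2). *)

From mathcomp Require Import all_boot all_order all_algebra.
From mathcomp Require Import reals complex zify lra.
Set Implicit Arguments.
Unset Strict Implicit.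
Unset Printing Implicit Defensive.
Import Order.TTheory GRing.Theory Num.Theory.

Definition lowbits (n r : nat) : pred nat := [pred i | i %% 2 ^ n == r].
Notation low0 n := (lowbits n 0).
Notation low1 n := (lowbits n (2 ^ n).-1).

Lemma qbit0 t : qbit 0 t = false.
Proof. by rewrite /qbit div0n. Qed.

Lemma qbit_modn n i t : t < n -> qbit (i %% 2 ^ n) t = qbit i t.
Proof.
move=> tn; rewrite /qbit {2}(divn_eq i (2 ^ n)).
have -> : 2 ^ n = 2 ^ (n - t) * 2 ^ t by rewrite -expnD subnK // ltnW.
rewrite mulnA divnMDl ?expn_gt0 // oddD oddM oddX.
by rewrite subn_eq0 leqNgt tn andbF.
Qed.

Lemma qbit_pred_exp2 n t : t < n -> qbit (2 ^ n).-1 t.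
Proof.
move=> tn; have [s ->] : exists s, n = s.+1 + t by exists (n - t.+1); lia.
have pos_s : 0 < 2 ^ s by rewrite expn_gt0.
have pos_t : 0 < 2 ^ t by rewrite expn_gt0.
have -> : (2 ^ (s.+1 + t)).-1 = (2 ^ s.+1).-1 * 2 ^ t + (2 ^ t).-1.
  by rewrite expnD expnS; nia.
rewrite /qbit divnMDl // divn_small ?ltn_predL // addn0.
by rewrite expnS -subn1 oddB ?muln_gt0 ?pos_s // oddM.
Qed.

Lemma pred_exp2_eq0 n : ((2 ^ n).-1 == 0) = (n == 0).
Proof.
case: n => [|n] //; have : 0 < 2 ^ n by rewrite expn_gt0.
by rewrite expnS; lia.
Qed.

Lemma pauli_weight_identity k n (sigma : {ffun 'I_k -> 'I_4}) :
  n <= k -> pauli_weight sigma < n -> exists2 t : 'I_k, t < n & nat_of_ord (sigma t) = 0.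
Proof.
move=> nk wn.
have : [exists (t : 'I_k | t < n), sigma t == 0 :> nat].
  apply: contraT => /exists_inPn nonzero_low.
  have low_support : widen_ord nk @: [set: 'I_n] \subset [set t | sigma t != 0 :> nat].
    apply/subsetP => _ /imsetP[t _ ->].
    by rewrite inE nonzero_low // unfold_in /= ltn_ord.
  move: (subset_leq_card low_support); rewrite card_imset ?cardsT ?card_ord.
    by move=> /leq_ltn_trans /(_ wn); rewrite ltnn.
  by move=> t1 t2 [] /ord_inj.
by case/exists_inP => t tn /eqP; exists t.
Qed.

Local Open Scope ring_scope.

Lemma sum_modn_eq (V : nmodType) (N M r : nat) (F : nat -> V) : (r < N)%N ->
  \sum_(0 <= i < M * N | (i %% N == r)%N) F (i %/ N)%N = \sum_(0 <= b < M) F b.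
Proof.
move=> rN; elim: M => [|M IH]; first by rewrite mul0n !big_geq.
rewrite big_nat_recr //= -IH mulSn addnC (big_cat_nat _ (leq_addr _ _)) //=.
congr (_ + _); rewrite -{1}(add0n (M * N)%N) big_addn addKn big_mkord.
rewrite (big_pred1 (Ordinal rN)) /= => [|i]; last by rewrite addnC modnMDl modn_small.
by rewrite divnDMl ?(leq_ltn_trans _ rN) // divn_small.
Qed.

Section BlockBound.
Variable R : realType.
Local Notation C := R[i].
Local Notation inv_sqrt2 := (((Num.sqrt (2 : R))^-1)%:C%C : C).

Lemma pauli_mx_low_block k n (sigma : {ffun 'I_k -> 'I_4}) (i j : 'I_(2 ^ k)) :
  (n <= k)%N -> (pauli_weight sigma < n)%N ->
  low0 n i -> low1 n j -> pauli_mx R sigma i j = 0.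
Proof.
move=> nk wn /eqP i0 /eqP j1; have [t tn sigma_t] := pauli_weight_identity nk wn.
rewrite mxE (bigD1 t) //= /pauli1 sigma_t -(qbit_modn i tn) -(qbit_modn j tn).
by rewrite i0 j1 qbit0 qbit_pred_exp2 // mul0r.
Qed.

Lemma pauli_deg_low_block k n d (B : 'M[C]_(2 ^ k)) (i j : 'I_(2 ^ k)) :
  (n <= k)%N -> (d < n)%N -> pauli_deg_le B d ->
  low0 n i -> low1 n j -> B i j = 0.
Proof.
move=> nk dn [c [c_high ->]] i0 j1; rewrite summxE big1 // => sigma _.
have [/c_high -> | w_le] := ltnP d (pauli_weight sigma); first by rewrite scale0r mxE.
by rewrite mxE (pauli_mx_low_block nk _ i0 j1) ?mulr0 // (leq_ltn_trans w_le dn).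
Qed.

Definition restrict (N : nat) (P : pred nat) (v : 'cV[C]_N) : 'cV[C]_N :=
  \col_i (if P i then v i 0 else 0).

Lemma restrictZ N P c (v : 'cV[C]_N) : restrict P (c *: v) = c *: restrict P v.
Proof. by apply/matrixP => i j; rewrite !mxE; case: (P i); rewrite ?mulr0. Qed.

Lemma vnorm_ge0 N (v : 'cV[C]_N) : 0 <= vnorm v.
Proof. by rewrite sqrtC_ge0 sumr_ge0 // => i _; rewrite exprn_ge0. Qed.

Lemma vnorm_sqr N (v : 'cV[C]_N) : vnorm v ^+ 2 = \sum_i `|v i 0| ^+ 2.
Proof. exact: sqrtCK. Qed.

Lemma vnormZ N c (v : 'cV[C]_N) : vnorm (c *: v) = `|c| * vnorm v.
Proof.
rewrite /vnorm (eq_bigr (fun i => `|c| ^+ 2 * `|v i 0| ^+ 2)) => [|i _]; last first.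
  by rewrite mxE normrM exprMn.
rewrite -mulr_sumr sqrtCM ?sqrCK ?nnegrE ?exprn_ge0 //.
by rewrite sumr_ge0 // => i _; rewrite exprn_ge0.
Qed.

Lemma vnorm_restrict_sqr N P (v : 'cV[C]_N) :
  vnorm (restrict P v) ^+ 2 = \sum_(i < N | P i) `|v i 0| ^+ 2.
Proof.
rewrite vnorm_sqr [RHS]big_mkcond; apply: eq_bigr => i _.
by rewrite mxE; case: (P i); rewrite ?normr0 ?expr0n.
Qed.

Lemma vnorm_restrict_le N P (v : 'cV[C]_N) : vnorm (restrict P v) <= vnorm v.
Proof.
rewrite ler_sqrtC ?nnegrE ?sumr_ge0 // => [|i _|i _]; rewrite ?exprn_ge0 //.
apply: ler_sum => i _; rewrite mxE; case: (P i) => //.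
by rewrite normr0 expr0n exprn_ge0.
Qed.

Lemma proj_mul_restrict N P (v : 'cV[C]_N) :
  proj v *m restrict P v = vnorm (restrict P v) ^+ 2 *: v.
Proof.
apply/matrixP => i j; rewrite (ord1 j) /proj -mulmxA mxE big_ord1 [RHS]mxE mulrC.
rewrite vnorm_restrict_sqr [in RHS]big_mkcond mxE; congr (_ * _); apply: eq_bigr => l _.
by rewrite !mxE; case: (P l); rewrite ?mulr0 // normCK mulrC.
Qed.

Lemma approx_deg_ge_proj k n (v : 'cV[C]_(2 ^ k)) (eps : R) :
  (n <= k)%N -> 0 < vnorm (restrict (low1 n) v) ->
  eps%:C%C < vnorm (restrict (low0 n) v) * vnorm (restrict (low1 n) v) ->
  approx_deg_ge (proj v) eps n.
Proof.
set v0 := restrict (low0 n) v; set v1 := restrict (low1 n) v.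
move=> nk v1_gt0 eps_lt B B_near d B_deg; rewrite leqNgt; apply/negP => dn.
have B_block :
    restrict (low0 n) ((proj v - B) *m v1) = restrict (low0 n) (proj v *m v1).
  apply/matrixP => i j; rewrite (ord1 j) mulmxBl !mxE; case: ifP => // i0.
  rewrite [X in _ - X]big1 ?subr0 // => l _.
  rewrite /v1 mxE; case: ifP => l1; rewrite ?mulr0 //.
  by have -> := pauli_deg_low_block nk dn B_deg i0 l1; rewrite mul0r.
have lower : vnorm v0 * vnorm v1 * vnorm v1 <= vnorm ((proj v - B) *m v1).
  rewrite mulrAC -mulrA mulrC -expr2 -[X in X * _]ger0_norm ?exprn_ge0 ?vnorm_ge0 //.
  by rewrite -vnormZ -restrictZ -proj_mul_restrict -B_block vnorm_restrict_le.
have := le_trans lower (B_near v1); rewrite (ler_pM2r v1_gt0) => /(lt_le_trans eps_lt).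
by rewrite ltxx.
Qed.

Lemma approx_deg_ge_balanced k n (v : 'cV[C]_(2 ^ k)) (eps : R) :
  (n <= k)%N -> eps < 2^-1 ->
  vnorm (restrict (low0 n) v) ^+ 2 = 2^-1 ->
  vnorm (restrict (low1 n) v) ^+ 2 = 2^-1 ->
  approx_deg_ge (proj v) eps n.
Proof.
move=> nk eps_lt v0_sqr v1_sqr.
have half_norm (u : 'cV[C]_(2 ^ k)) : vnorm u ^+ 2 = 2^-1 -> vnorm u = sqrtC 2^-1.
  by move=> <-; rewrite sqrCK ?vnorm_ge0.
apply: (approx_deg_ge_proj nk); rewrite (half_norm _ v1_sqr).
  by rewrite sqrtC_gt0 invr_gt0 ltr0n.
rewrite (half_norm _ v0_sqr) -expr2 sqrtCK.
have -> : (2^-1 : C) = (2^-1 : R)%:C%C by rewrite fmorphV rmorph_nat.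
by rewrite ltcR.
Qed.

Lemma sqr_norm_inv_sqrt2 : `|inv_sqrt2| ^+ 2 = 2^-1.
Proof.
rewrite sqr_normc conjc_real -rmorphM /= -expr2 exprVn sqr_sqrtr ?ler0n //.
by rewrite fmorphV rmorph_nat.
Qed.

Lemma cat_state_low0 n : (0 < n)%N ->
  vnorm (restrict (low0 n) (cat_state R n)) ^+ 2 = 2^-1.
Proof.
move=> n_gt0; have N_gt0 : (0 < 2 ^ n)%N by rewrite expn_gt0.
rewrite vnorm_restrict_sqr (big_pred1 (Ordinal N_gt0)) => [|i]; last first.
  by rewrite /lowbits /= modn_small.
by rewrite mxE /= eq_sym pred_exp2_eq0 eqn0Ngt n_gt0 addr0 mulr1 sqr_norm_inv_sqrt2.
Qed.

Lemma cat_state_low1 n : (0 < n)%N ->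
  vnorm (restrict (low1 n) (cat_state R n)) ^+ 2 = 2^-1.
Proof.
move=> n_gt0; have N_gt0 : ((2 ^ n).-1 < 2 ^ n)%N by rewrite ltn_predL expn_gt0.
rewrite vnorm_restrict_sqr (big_pred1 (Ordinal N_gt0)) => [|i]; last first.
  by rewrite /lowbits /= modn_small.
by rewrite mxE /= pred_exp2_eq0 eqn0Ngt n_gt0 eqxx add0r mulr1 sqr_norm_inv_sqrt2.
Qed.

Lemma vat_ord N (v : 'cV[C]_N) (b : 'I_N) : vat v b = v b 0.
Proof. by rewrite /vat; case: insubP => [u _ /val_inj -> //|]; rewrite ltn_ord. Qed.

Lemma sum_lowbits_state n m r (psi : 'cV[C]_(2 ^ m)) :
  is_state psi -> (r < 2 ^ n)%N ->
  \sum_(i < 2 ^ (n + m) | lowbits n r i) `|vat psi (i %/ 2 ^ n)| ^+ 2 = 1.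
Proof.
move=> psi_state rn.
rewrite -(big_mkord (lowbits n r) (fun i => `|vat psi (i %/ 2 ^ n)| ^+ 2)).
rewrite expnD mulnC (sum_modn_eq _ (fun b => `|vat psi b| ^+ 2)) // big_mkord -psi_state.
by apply: eq_bigr => b _; rewrite vat_ord.
Qed.

Lemma nekomata_low0 n m (psi0 psi1 : 'cV[C]_(2 ^ m)) :
  (0 < n)%N -> is_state psi0 ->
  vnorm (restrict (low0 n) (nekomata n psi0 psi1)) ^+ 2 = 2^-1.
Proof.
move=> n_gt0 psi0_state; rewrite vnorm_restrict_sqr.
pose F (i : 'I_(2 ^ (n + m))) := 2^-1 * `|vat psi0 (i %/ 2 ^ n)| ^+ 2.
rewrite (eq_bigr F) => [|i /eqP i0].
  by rewrite -mulr_sumr sum_lowbits_state ?expn_gt0 ?mulr1.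
rewrite mxE i0 eqxx eq_sym pred_exp2_eq0 eqn0Ngt n_gt0 /= mul0r addr0 mul1r normrM exprMn.
by rewrite sqr_norm_inv_sqrt2.
Qed.

Lemma nekomata_low1 n m (psi0 psi1 : 'cV[C]_(2 ^ m)) :
  (0 < n)%N -> is_state psi1 ->
  vnorm (restrict (low1 n) (nekomata n psi0 psi1)) ^+ 2 = 2^-1.
Proof.
move=> n_gt0 psi1_state; rewrite vnorm_restrict_sqr.
pose F (i : 'I_(2 ^ (n + m))) := 2^-1 * `|vat psi1 (i %/ 2 ^ n)| ^+ 2.
rewrite (eq_bigr F) => [|i /eqP i1].
  by rewrite -mulr_sumr sum_lowbits_state ?ltn_predL ?expn_gt0 ?mulr1.
rewrite mxE i1 eqxx pred_exp2_eq0 eqn0Ngt n_gt0 /= mul0r add0r mul1r normrM exprMn.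
by rewrite sqr_norm_inv_sqrt2.
Qed.

End BlockBound.

Theorem corollary6p2 (R : realType) (eps : R)
    (heps : eps < (4 * Num.sqrt (2 : R))^-1) :
  (forall (n m : nat) (psi0 psi1 : 'cV[R[i]]_(2 ^ m)),
      is_state psi0 -> is_state psi1 ->
      approx_deg_ge (proj (nekomata n psi0 psi1)) eps n) /\
  (forall n : nat, approx_deg_ge (proj (cat_state R n)) eps n).
Proof.
have eps_lt : eps < 2^-1.
  apply: (lt_le_trans heps); rewrite lef_pV2 ?posrE ?mulr_gt0 ?sqrtr_gt0 ?ltr0n //.
  have : 1 <= Num.sqrt (2 : R) by rewrite -[leLHS]sqrtr1 ler_sqrt ?ler0n // ler1n.
  lra.
split=> [n m psi0 psi1 psi0_state psi1_state | n];
  (have [-> | n_gt0] := posnP n; first by move=> B _ d _);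
  apply: approx_deg_ge_balanced => //.
- exact: leq_addr.
- exact: nekomata_low0.
- exact: nekomata_low1.
- exact: cat_state_low0.
- exact: cat_state_low1.
Qed.
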